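(* Let $n\ge1$, $d\ge1$, $m\ge1$ be integers and $p\in(0,1)$. For integers $d_1,d_2,k$ put $$P(n,d_1,d_2,k,p)=n^{d_2-k}\left(1-p^{d_2}-p^{d_1}+2p^{d_1+d_2-k}\right)^m.$$ Then $$\max_{d_1,d_2,k}P(n,d_1,d_2,k,p)=\max_{0\le w\le d-1}\max\{P(n,d,d,w,p),\,P(n,w,d,w,p)\}=\max_{0\le w\le d-1}\max\left\{n^{d-w}(1-2p^d+2p^{2d-w})^m,\ n^{d-w}(1+p^d-p^w)^m\right\},$$ where the maximum on the left is over all integers $d_1,d_2,k$ with $0\le d_1,d_2\le d$ and $0\le k\le\min(d_1,d_2)$, excluding the triples with $d_1=d_2=k$, and $w$ ranges over integers. *)

From mathcomp Require Import all_boot all_order all_algebra.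
From mathcomp Require Import reals.
Set Implicit Arguments. Unset Strict Implicit. Unset Printing Implicit Defensive.
Import Order.TTheory GRing.Theory Num.Theory.
Local Open Scope ring_scope.

(* P(n,d1,d2,k,p) = n^(d2-k) * (1 - p^d2 - p^d1 + 2 p^(d1+d2-k))^m .
   Exponents are natural numbers; on the index range considered
   (k <= min d1 d2) the truncated subtractions are exact. *)
Definition Pfun {R : realType} (n m d1 d2 k : nat) (p : R) : R :=
  (n%:R) ^+ (d2 - k)%N * (1 - p ^+ d2 - p ^+ d1 + 2 * p ^+ (d1 + d2 - k)%N) ^+ m.

From mathcomp Require Import all_boot all_order all_algebra.
From mathcomp Require Import reals.
From mathcomp Require Import ring lra zify.
Import Order.TTheory GRing.Theory Num.Theory.
Local Open Scope ring_scope.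

(* Writing t = p^k, u = p^(d1-k), v = p^(d2-k), the base of P(n,d1,d2,k,p) is
   1 - t (u (1 - v) + v (1 - u)), which decreases in t and is affine in u.
   For k <= d1 <= d2 put w = k + (d - d2): then n^(d2-k) = n^(d-w), and
   replacing t by p^w = t p^(d-d2) only enlarges the base, after which the
   affine dependence on u in [v, 1] is maximised at u = v, giving
   P(n,d,d,w,p), or at u = 1, giving P(n,w,d,w,p).  The case d2 < d1 reduces
   to this one because the base is symmetric in (d1, d2) and n^(d1-k) is
   the larger power. *)

Lemma affine_le_max (R : realDomainType) (a b x y u : R) :
  x <= u -> u <= y -> a + b * u <= Num.max (a + b * x) (a + b * y).
Proof.
move=> xu uy; rewrite le_max !lerD2l.
have [b0|b0] := lerP 0 b; first by rewrite (ler_wpM2l b0 uy) orbT.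
by rewrite (ler_wnM2l (ltW b0) xu).
Qed.

Definition Pbase {R : comPzRingType} (t u v : R) : R :=
  1 - t * v - t * u + 2 * (t * u * v).

Section Pbase.
Context {R : realDomainType}.
Implicit Types t u v : R.

Lemma PbaseE t u v : Pbase t u v = 1 - t * (u * (1 - v) + v * (1 - u)).
Proof. by rewrite /Pbase; ring. Qed.

Lemma PbaseC t u v : Pbase t u v = Pbase t v u.
Proof. by rewrite /Pbase; ring. Qed.

Lemma Pbase_ge0 t u v : 0 <= t <= 1 -> 0 <= u <= 1 -> 0 <= v <= 1 ->
  0 <= Pbase t u v.
Proof.
move=> /andP[t0 t1] /andP[u0 u1] /andP[v0 v1]; rewrite PbaseE subr_ge0.
have uv0 : 0 <= u * (1 - v) + v * (1 - u) by rewrite addr_ge0 ?mulr_ge0 ?subr_ge0.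
have uv1 : u * (1 - v) + v * (1 - u) <= 1.
  have : 0 <= (1 - u) * (1 - v) + u * v by rewrite addr_ge0 ?mulr_ge0 ?subr_ge0.
  lra.
by rewrite mulr_ile1.
Qed.

Lemma Pbase_antitone t t' u v : t' <= t -> 0 <= u <= 1 -> 0 <= v <= 1 ->
  Pbase t u v <= Pbase t' u v.
Proof.
move=> tt' /andP[u0 u1] /andP[v0 v1]; rewrite !PbaseE lerD2l lerN2.
by rewrite ler_wpM2r // addr_ge0 ?mulr_ge0 ?subr_ge0.
Qed.

Lemma Pbase_le_max t u v : v <= u -> u <= 1 ->
  Pbase t u v <= Num.max (Pbase t v v) (Pbase t 1 v).
Proof.
have affine w : Pbase t w v = (1 - t * v) + t * (2 * v - 1) * w.
  by rewrite /Pbase; ring.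
by rewrite !affine; apply: affine_le_max.
Qed.

End Pbase.

Lemma Pfun_ddwE (R : realType) n m d w (p : R) :
  Pfun n m d d w p = n%:R ^+ (d - w) * (1 - 2 * p ^+ d + 2 * p ^+ (2 * d - w)) ^+ m.
Proof. by rewrite /Pfun mul2n -addnn; congr (_ * (_ + _) ^+ _); ring. Qed.

Lemma Pfun_wdwE (R : realType) n m d w (p : R) :
  Pfun n m w d w p = n%:R ^+ (d - w) * (1 + p ^+ d - p ^+ w) ^+ m.
Proof. by rewrite /Pfun addKn; congr (_ * _ ^+ _); ring. Qed.

Section Pfun.
Context {R : realType} (n m : nat) {p : R}.
Hypotheses (p0 : 0 <= p) (p1 : p <= 1).

Let pX_unit k : 0 <= p ^+ k <= 1.
Proof. by rewrite exprn_ge0 ?exprn_ile1. Qed.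

Lemma PfunE {d1 d2 k} : (k <= d1)%N -> (k <= d2)%N ->
  Pfun n m d1 d2 k p =
  n%:R ^+ (d2 - k) * Pbase (p ^+ k) (p ^+ (d1 - k)) (p ^+ (d2 - k)) ^+ m.
Proof.
move=> /subnKC {1}<- /subnKC {1}<-; rewrite /Pfun !addKn.
have -> : (k + (d1 - k) + (k + (d2 - k)) - k = k + (d1 - k) + (d2 - k))%N by lia.
by rewrite /Pbase !exprD; congr (_ * _ ^+ _); ring.
Qed.

Lemma Pfun_le_swap {d1 d2 k} : (1 <= n)%N -> (k <= d2)%N -> (d2 <= d1)%N ->
  Pfun n m d1 d2 k p <= Pfun n m d2 d1 k p.
Proof.
move=> n1 kd2 d21; have kd1 := leq_trans kd2 d21.
rewrite (PfunE kd1 kd2) (PfunE kd2 kd1) PbaseC ler_wpM2r ?exprn_ge0 ?Pbase_ge0 //.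
by rewrite ler_weXn2l ?ler1n ?leq_sub2r.
Qed.

Lemma Pfun_le_extremal d d1 d2 k w :
  (k <= d1)%N -> (d1 <= d2)%N -> (d2 <= d)%N -> w = (k + (d - d2))%N ->
  Pfun n m d1 d2 k p <= Num.max (Pfun n m d d w p) (Pfun n m w d w p).
Proof.
move=> kd1 d12 d2d w_def; have kd2 := leq_trans kd1 d12.
have wd : (w <= d)%N by lia.
rewrite (PfunE kd1 kd2) (PfunE wd wd) (PfunE (leqnn w) wd) subnn expr0.
have -> : (d - w = d2 - k)%N by lia.
set t := p ^+ k; set u := p ^+ (d1 - k); set v := p ^+ (d2 - k).
have p_wt : p ^+ w <= t by rewrite w_def ler_wiXn2l ?leq_addr.
have vu : v <= u by rewrite ler_wiXn2l ?leq_sub2r.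
have base_le : Pbase t u v <= Num.max (Pbase (p ^+ w) v v) (Pbase (p ^+ w) 1 v).
  apply: le_trans (Pbase_le_max _ _ _ vu (exprn_ile1 _ p0 p1)).
  by apply: Pbase_antitone; rewrite ?pX_unit.
have term_le (b b' : R) : 0 <= b -> b <= b' ->
    n%:R ^+ (d2 - k) * b ^+ m <= n%:R ^+ (d2 - k) * b' ^+ m.
  move=> b0 bb'; apply: ler_wpM2l; first exact: exprn_ge0.
  by rewrite lerXn2r ?nnegrE ?(le_trans b0).
have base0 : 0 <= Pbase t u v by apply: Pbase_ge0; apply: pX_unit.
by move: base_le; rewrite !le_max => /orP[] /(term_le _ _ base0) ->; rewrite ?orbT.
Qed.

End Pfun.

Lemma exists_extremal_bound {R : realType} (n m : nat) {d : nat} {p : R}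
    {d1 d2 k : 'I_d.+1} :
  (1 <= n)%N -> 0 <= p -> p <= 1 ->
  (k <= minn d1 d2)%N -> ~~ ((d1 == d2 :> nat) && (d2 == k :> nat)) ->
  exists w : 'I_d,
    Pfun n m d1 d2 k p <= Num.max (Pfun n m d d w p) (Pfun n m w d w p).
Proof.
move=> n1 p0 p1; rewrite leq_min => /andP[kd1 kd2] not_diag.
have d1d : (d1 <= d)%N by rewrite -ltnS.
have d2d : (d2 <= d)%N by rewrite -ltnS.
have [d12|d21] := leqP d1 d2.
- have wd : (k + (d - d2) < d)%N.
    suff : (k < d2)%N by lia.
    by rewrite ltn_neqAle kd2 andbT; apply: contra not_diag => /eqP k_d2; lia.
  by exists (Ordinal wd); apply: Pfun_le_extremal kd1 d12 d2d _.
- have wd : (k + (d - d1) < d)%N by lia.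
  exists (Ordinal wd); apply: le_trans (Pfun_le_swap n m p0 p1 n1 kd2 (ltnW d21)) _.
  exact: Pfun_le_extremal kd2 (ltnW d21) d1d _.
Qed.

Theorem lemma2 (R : realType) (n d m : nat) (p : R)
  (hn : (1 <= n)%N) (hd : (1 <= d)%N) (hm : (1 <= m)%N)
  (hp0 : 0 < p) (hp1 : p < 1) :
  let s := Pfun n m d d 0 p in
  (\big[Num.max/s]_(d1 < d.+1) \big[Num.max/s]_(d2 < d.+1)
     \big[Num.max/s]_(k < d.+1 | ((k <= minn d1 d2)%N
                                  && ~~ ((d1 == d2 :> nat) && (d2 == k :> nat))))
        Pfun n m d1 d2 k p
   = \big[Num.max/s]_(w < d) Num.max (Pfun n m d d w p) (Pfun n m w d w p))
  /\
  (\big[Num.max/s]_(w < d) Num.max (Pfun n m d d w p) (Pfun n m w d w p)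
   = \big[Num.max/s]_(w < d)
       Num.max ((n%:R) ^+ (d - w)%N * (1 - 2 * p ^+ d + 2 * p ^+ (2 * d - w)%N) ^+ m)
               ((n%:R) ^+ (d - w)%N * (1 + p ^+ d - p ^+ w) ^+ m)).
Proof.
move=> s; split; last by apply: eq_bigr => w _; rewrite Pfun_ddwE Pfun_wdwE.
set M := \big[Num.max/s]_(w < d) _.
have s_le_M : s <= M by apply: (bigmax_sup (Ordinal hd)); rewrite ?le_max ?lexx.
apply/le_anti/andP; split.
- apply: bigmax_le => // d1 _; apply: bigmax_le => // d2 _.
  apply: bigmax_le => // k /andP[kd not_diag].
  have [w bound] := exists_extremal_bound n m hn (ltW hp0) (ltW hp1) kd not_diag.
  exact: bigmax_sup bound.
- apply: bigmax_le => [|w _]; first exact: bigmax_ge_id.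
  have w_lt : (w < d.+1)%N := leqW (ltn_ord w).
  rewrite ge_max; apply/andP; split.
  + apply: (bigmax_sup ord_max) => //; apply: (bigmax_sup ord_max) => //.
    apply: (bigmax_sup (Ordinal w_lt)) => //=.
    by rewrite minnn (ltnW (ltn_ord w)) eqxx gtn_eqF.
  + apply: (bigmax_sup (Ordinal w_lt)) => //; apply: (bigmax_sup ord_max) => //.
    apply: (bigmax_sup (Ordinal w_lt)) => //=.
    by rewrite (minn_idPl (ltnW (ltn_ord w))) leqnn ltn_eqF.
Qed.
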